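(* Let $G$ be a countable even-by-quotient abelian group, let $r_0(G)$ be its torsion free rank and $r_2(G)$ its $2$-rank. Then there is a monomorphism \[f:G\to\bigoplus_{i=1}^{r_0(G)}\mathbb Z[\tfrac12]\oplus\bigoplus_{i=1}^{r_2(G)}\mathbb Z(2^\infty).\] Moreover, given a maximal independent system $L=\{g_i\}_{i=1}^{r_0(G)}\cup\{h_i\}_{i=1}^{r_2(G)}$ of $G$ with the $g_i$ of infinite order and the $h_i$ in the socle of $G$, $f$ can be chosen so that $f(g_i)$ is the element $1$ of the $i$-th $\mathbb Z[\tfrac12]$ summand (and $0$ elsewhere) and $f(h_i)$ is the element of order $2$ of the $i$-th $\mathbb Z(2^\infty)$ summand (and $0$ elsewhere).
   Context: A set of nonzero elements $\{x_j\}$ of an abelian group is independent if $\sum n_jx_j=0$ implies $n_jx_j=0$ for all $j$. $G$ is even-by-quotient if, for $H$ the subgroup generated by a maximal independent system of elements of infinite order, every element of $G/H$ has order a power of $2$. $r_0(G)=\dim_{\mathbb Q}(G\otimes\mathbb Q)$; $r_2(G)$ is the cardinality of a maximal independent system of elements of order $2$. The socle of $G$ is the subgroup of elements whose order is square-free (here: of order $1$ or $2$). $\mathbb Z[\tfrac12]=\{m/2^k\}$ and $\mathbb Z(2^\infty)=\varinjlim(\mathbb Z_2\to\mathbb Z_4\to\cdots)\cong\mathbb Z[\tfrac12]/\mathbb Z$. *)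

From mathcomp Require Import all_boot all_order all_algebra.
From Stdlib Require List.
Set Implicit Arguments. Unset Strict Implicit. Unset Printing Implicit Defensive.
Import Order.TTheory GRing.Theory Num.Theory.
Local Open Scope ring_scope.

Definition infinite_order (G : zmodType) (x : G) : Prop :=
  forall n : nat, (0 < n)%N -> x *+ n <> 0.

Definition independent (G : zmodType) (S : G -> Prop) : Prop :=
  (forall x, S x -> x <> 0) /\
  forall (s : seq G) (n : G -> int),
    uniq s -> (forall x, x \in s -> S x) ->
    \sum_(x <- s) x *~ n x = 0 -> forall x, x \in s -> x *~ n x = 0.

Definition max_independent (G : zmodType) (S : G -> Prop) : Prop :=
  independent S /\
  forall y, ~ S y -> ~ independent (fun x => S x \/ x = y).

Definition max_independent_inf (G : zmodType) (S : G -> Prop) : Prop :=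
  independent S /\ (forall x, S x -> infinite_order x) /\
  forall y, ~ S y -> infinite_order y -> ~ independent (fun x => S x \/ x = y).

Definition span (G : zmodType) (S : G -> Prop) (x : G) : Prop :=
  exists (s : seq G) (n : G -> int),
    (forall y, y \in s -> S y) /\ x = \sum_(y <- s) y *~ n y.

Definition quotient_2primary (G : zmodType) (S : G -> Prop) : Prop :=
  forall x : G, exists k : nat, span S (x *+ 2 ^ k).

Definition even_by_quotient (G : zmodType) : Prop :=
  exists S : G -> Prop, max_independent_inf S /\ quotient_2primary S.

Definition countable_group (G : zmodType) : Prop :=
  exists e : G -> nat, injective e.

Definition adapted_system (G : zmodType) (I J : Type) (g : I -> G) (h : J -> G)
  : Prop :=
  injective g /\ injective h /\ (forall i j, g i <> h j) /\
  (forall i, infinite_order (g i)) /\ (forall j, h j *+ 2 = 0) /\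
  max_independent (fun x => (exists i, x = g i) \/ (exists j, x = h j)).

(* Z[1/2] = dyadic rationals; Z(2^oo) = Z[1/2]/Z, each class represented by its
   unique dyadic representative in [0,1).  An element of the direct sum is a pair
   (a, b) with a : I -> rat, b : J -> rat finitely supported; the group law is
   componentwise addition, taken modulo 1 on the b-part. *)

Definition dyadic (q : rat) : Prop :=
  exists (m : int) (k : nat), q = m%:~R / (2 ^ k)%:R.

Definition is_integer (q : rat) : Prop := exists m : int, q = m%:~R.

Definition Z2inf_rep (q : rat) : Prop := dyadic q /\ 0 <= q /\ q < 1.

Definition dsum_monomorphism (G : zmodType) (I J : Type)
  (a : G -> I -> rat) (b : G -> J -> rat) : Prop :=
  (forall x i, dyadic (a x i)) /\
  (forall x j, Z2inf_rep (b x j)) /\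
  (forall x, exists s : list I, forall i, a x i <> 0 -> List.In i s) /\
  (forall x, exists s : list J, forall j, b x j <> 0 -> List.In j s) /\
  (forall x y i, a (x + y) i = a x i + a y i) /\
  (forall x y j, is_integer (b (x + y) j - (b x j + b y j))) /\
  (forall x y, a x = a y -> b x = b y -> x = y).

(* Complete the g_i to a maximal independent system by a basis h_j of the socle, chosen
   greedily along an enumeration of G.  The Z[1/2]-coordinates of x are those of some
   2^k x in <g_i> divided by 2^k; they exist because G/<g_i> is 2-primary and are well
   defined by independence.  The Z(2^oo)-coordinates form a homomorphism into the
   functions J -> Q/Z sending h_j to 1/2 in the j-th place, extended from <g_i, h_j> to
   all of G one element at a time using the divisibility of Q/Z; its values are dyadic
   since 2^k x in <g_i> maps to 0.  If both coordinates of z vanish, z is 2-primary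
   torsion, so a nonzero multiple w of z lies in the socle, hence in <g_i, h_j> with all
   h_j-coefficients even, which forces w = 0. *)

From mathcomp Require Import all_boot all_order all_algebra ring.
From Stdlib Require Import Classical ClassicalEpsilon ProofIrrelevance Wf_nat.
From Stdlib Require Import FunctionalExtensionality PropExtensionality.
Set Implicit Arguments. Unset Strict Implicit. Unset Printing Implicit Defensive.
Import Order.TTheory GRing.Theory Num.Theory.
Local Open Scope ring_scope.

Lemma ex_least_nat (P : nat -> Prop) :
  (exists n, P n) -> exists n, P n /\ forall m, P m -> (n <= m)%N.
Proof.
move=> exP; have [n [[Pn minn] _]] :=
  @dec_inh_nat_subset_has_unique_least_element P (fun n => classic (P n)) exP.
by exists n; split=> // m /minn /ssrnat.leP.
Qed.

Lemma list_preimage (T : Type) (U : eqType) (f : T -> U) (s : seq U) :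
  injective f -> exists t : list T, forall x, f x \in s -> List.In x t.
Proof.
move=> f_inj; elim: s => [|y s [t ht]]; first by exists nil.
case: (classic (exists x, y = f x)) => [[x ->]|ny].
  by exists (x :: t) => x'; rewrite inE => /orP[/eqP/f_inj ->|/ht]; [left|right].
exists t => x; rewrite inE => /orP[/eqP fx|/ht //].
by case: ny; exists x.
Qed.

Section FormalCombinations.
Variable G : zmodType.
Implicit Types (l : seq (G * int)) (S : G -> Prop) (x y : G).

Definition csum l : G := \sum_(p <- l) p.1 *~ p.2.
Definition ccoef l y : int := \sum_(p <- l | p.1 == y) p.2.
Definition comb_in S l := forall p, p \in l -> S p.1.
Definition cscale l (c : int) := [seq (p.1, p.2 * c) | p <- l].

Lemma csum_nil : csum [::] = 0. Proof. exact: big_nil. Qed.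
Lemma ccoef_nil y : ccoef [::] y = 0. Proof. exact: big_nil. Qed.
Lemma csum1 y c : csum [:: (y, c)] = y *~ c. Proof. exact: big_seq1. Qed.
Lemma ccoef1 y c z : ccoef [:: (y, c)] z = if y == z then c else 0.
Proof. by rewrite /ccoef big_mkcond big_seq1. Qed.
Lemma csum_cat l1 l2 : csum (l1 ++ l2) = csum l1 + csum l2.
Proof. exact: big_cat. Qed.
Lemma ccoef_cat l1 l2 y : ccoef (l1 ++ l2) y = ccoef l1 y + ccoef l2 y.
Proof. exact: big_cat. Qed.
Lemma csum_scale l c : csum (cscale l c) = csum l *~ c.
Proof. by rewrite /csum big_map mulrz_suml; apply: eq_bigr => p _; rewrite mulrzA. Qed.
Lemma ccoef_scale l c y : ccoef (cscale l c) y = ccoef l y * c.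
Proof. by rewrite /ccoef big_map big_distrl. Qed.

Lemma comb_in1 S y c : S y -> comb_in S [:: (y, c)].
Proof. by move=> Sy p; rewrite inE => /eqP ->. Qed.
Lemma comb_in_cat S l1 l2 : comb_in S l1 -> comb_in S l2 -> comb_in S (l1 ++ l2).
Proof. by move=> h1 h2 p; rewrite mem_cat => /orP[/h1|/h2]. Qed.
Lemma comb_in_scale S l c : comb_in S l -> comb_in S (cscale l c).
Proof. by move=> hl p /mapP[q /hl Sq ->]. Qed.
Lemma comb_in_sub S S' l : (forall x, S x -> S' x) -> comb_in S l -> comb_in S' l.
Proof. by move=> SS' hl p /hl /SS'. Qed.

Lemma ccoef_notin l y : y \notin map fst l -> ccoef l y = 0.
Proof.
move=> yl; rewrite /ccoef big_hasC //; apply/hasPn => p pl /=.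
by apply: contraNneq yl => <-; apply: map_f.
Qed.

Lemma csum_regroup l : csum l = \sum_(y <- undup (map fst l)) y *~ ccoef l y.
Proof.
under [RHS]eq_bigr => y _ do rewrite mulrz_sumr big_mkcond.
rewrite exchange_big /=; apply: eq_big_seq => p pl.
have p1l : p.1 \in undup (map fst l) by rewrite mem_undup map_f.
rewrite (bigD1_seq p.1 p1l (undup_uniq _)) /= eqxx big1 ?addr0 // => y /negbTE.
by rewrite eq_sym => ->.
Qed.

Lemma csum_eq0 l : (forall y, y *~ ccoef l y = 0) -> csum l = 0.
Proof. by move=> h; rewrite csum_regroup big1. Qed.

Lemma csum_eq0_ccoef S l : comb_in S l -> (forall y, S y -> ccoef l y = 0) -> csum l = 0.
Proof.
move=> hl hS; apply: csum_eq0 => y.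
have [/mapP[p /hl Sp ->]|/ccoef_notin->] := boolP (y \in map fst l); last exact: mulr0z.
by rewrite hS ?mulr0z.
Qed.

Lemma csum_split (a : pred (G * int)) l :
  csum l = csum [seq p <- l | a p] + csum [seq p <- l | ~~ a p].
Proof. by rewrite /csum !big_filter [LHS](bigID a). Qed.

Lemma ccoef_split (a : pred (G * int)) l y :
  ccoef l y = ccoef [seq p <- l | a p] y + ccoef [seq p <- l | ~~ a p] y.
Proof.
by rewrite /ccoef !big_filter_cond (bigID a) /=; congr (_ + _); apply: eq_bigl => p; rewrite andbC.
Qed.

Lemma csum_filter_neq l x :
  csum l = x *~ ccoef l x + csum [seq p <- l | p.1 != x].
Proof.
rewrite (csum_split (fun p => p.1 == x)); congr (_ + _).
by rewrite /csum /ccoef big_filter mulrz_sumr; apply: eq_bigr => p /eqP ->.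
Qed.

Lemma ccoef_filter_neq l x y : y != x ->
  ccoef [seq p <- l | p.1 != x] y = ccoef l y.
Proof.
move=> yx; rewrite /ccoef big_filter_cond; apply: eq_bigl => p.
by case: (eqVneq p.1 y) => [->|]; rewrite ?yx ?andbF.
Qed.

Lemma span_csum S l : comb_in S l -> span S (csum l).
Proof.
move=> hl; exists (undup (map fst l)), (ccoef l); rewrite -csum_regroup.
by split=> // y; rewrite mem_undup => /mapP[p /hl Sp ->].
Qed.

Lemma spanP S x : span S x <-> exists2 l, comb_in S l & x = csum l.
Proof.
split=> [[s [n [hs ->]]]|[l /span_csum Sl ->//]].
exists [seq (y, n y) | y <- s]; first by move=> p /mapP[y /hs Sy ->].
by rewrite /csum big_map.
Qed.

Lemma span0 S : span S 0.
Proof. by apply/spanP; exists [::]; rewrite ?csum_nil. Qed.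

Lemma span_mem S x : S x -> span S x.
Proof.
by move=> Sx; apply/spanP; exists [:: (x, 1)]; rewrite ?csum1 ?mulr1z //; apply: comb_in1.
Qed.

Lemma spanD S x y : span S x -> span S y -> span S (x + y).
Proof.
move=> /spanP[l1 h1 ->] /spanP[l2 h2 ->]; rewrite -csum_cat.
exact/span_csum/(comb_in_cat h1 h2).
Qed.

Lemma spanMz S x c : span S x -> span S (x *~ c).
Proof. by move=> /spanP[l hl ->]; rewrite -csum_scale; apply: span_csum; apply: comb_in_scale. Qed.

Lemma spanB S x y : span S x -> span S y -> span S (x - y).
Proof. by move=> Sx Sy; rewrite -mulrN1z; apply/spanD/spanMz. Qed.

Lemma span_sub S S' x : (forall y, S y -> S' y) -> span S x -> span S' x.
Proof. by move=> SS' /spanP[l hl ->]; exact/span_csum/(comb_in_sub SS' hl). Qed.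

Lemma span_span S x : span (span S) x -> span S x.
Proof.
move=> /spanP[l hl ->]; elim: l hl => [|[y c] l IHl] hl; first by rewrite csum_nil; apply: span0.
rewrite -cat1s csum_cat csum1; apply: spanD; first exact/spanMz/(hl (y, c))/mem_head.
by apply: IHl => p pl; apply: hl; rewrite inE pl orbT.
Qed.

Lemma independentP S : independent S <->
  (forall x, S x -> x <> 0) /\
  forall l, comb_in S l -> csum l = 0 -> forall y, y *~ ccoef l y = 0.
Proof.
split=> [[S0 hS]|[S0 hS]]; split=> //.
  move=> l hl l0 y; have [yl|/ccoef_notin->] := boolP (y \in map fst l); last first.
    by rewrite mulr0z.
  rewrite -mem_undup in yl; apply: (hS _ _ (undup_uniq _)) yl; last by rewrite -csum_regroup.
  by move=> x; rewrite mem_undup => /mapP[p /hl Sp ->].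
move=> s n us hs s0 x xs; have := hS [seq (y, n y) | y <- s]; rewrite /csum big_map => /(_ _ s0 x).
rewrite /ccoef big_map -big_filter filter_pred1_uniq // big_seq1; apply.
by move=> p /mapP[y /hs Sy ->].
Qed.

Lemma independent_sub S S' : (forall x, S x -> S' x) -> independent S' -> independent S.
Proof.
move=> SS' /independentP[S'0 hS']; apply/independentP; split=> [x /SS'/S'0 //|l hl].
exact/hS'/(comb_in_sub SS').
Qed.

Lemma independent_ccoef S l1 l2 : independent S -> comb_in S l1 -> comb_in S l2 ->
  csum l1 = csum l2 -> forall y, y *~ (ccoef l1 y - ccoef l2 y) = 0.
Proof.
move=> /independentP[_ hS] h1 h2 e y.
have := hS (l1 ++ cscale l2 (-1)) (comb_in_cat h1 (comb_in_scale h2)).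
rewrite csum_cat csum_scale e mulrN1z subrr => /(_ erefl y).
by rewrite ccoef_cat ccoef_scale mulrN1.
Qed.

End FormalCombinations.

Section Independence.
Variable G : zmodType.
Implicit Types (x y : G) (S : G -> Prop).

Lemma infinite_order_mulz_eq0 x c : infinite_order x -> x *~ c = 0 -> c = 0.
Proof.
move=> xinf; case: c => [[|n]|n] //; first by move/(xinf _ (ltn0Sn n)).
by rewrite NegzE mulrNz => /eqP; rewrite oppr_eq0 => /eqP/(xinf _ (ltn0Sn n)).
Qed.

Lemma order2_muln x n : x *+ 2 = 0 -> x *+ n = if odd n then x else 0.
Proof.
move=> x2; elim: n => [|n IHn]; first by rewrite mulr0n.
by rewrite mulrS IHn /=; case: (odd n); rewrite ?addr0 // -mulr2n.
Qed.

Lemma order2_mulz x c : x *+ 2 = 0 -> x *~ c = if odd `|c|%N then x else 0.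
Proof.
move=> x2; case: c => n; first exact: order2_muln.
rewrite NegzE mulrNz -pmulrn order2_muln //=; case: ifP => _; last exact: oppr0.
by apply/eqP; rewrite eq_sym -addr_eq0 -mulr2n x2.
Qed.

Lemma exists_order2_multiple y k : y *+ 2 ^ k = 0 -> y <> 0 ->
  exists m, (y *+ 2 ^ m) *+ 2 = 0 /\ y *+ 2 ^ m <> 0.
Proof.
move=> yk y0; have [[|m] [ym minm]] := @ex_least_nat (fun k => y *+ 2 ^ k = 0) (ex_intro _ k yk).
  by rewrite expn0 mulr1n in ym.
exists m; split; first by rewrite -mulrnA -expnSr.
by move=> /minm; rewrite ltnn.
Qed.

Lemma independent_adjoin S x : independent S -> x <> 0 ->
  (forall c, x *~ c <> 0 -> ~ span S (x *~ c)) ->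
  independent (fun y => S y \/ y = x).
Proof.
move=> /independentP[S0 hS] x0 xS; apply/independentP; split=> [y [/S0//|->//]|l hl l0].
set l' := [seq p <- l | p.1 != x].
have hl' : comb_in S l'.
  by move=> p; rewrite mem_filter => /andP[px /hl[//|/eqP]]; rewrite (negPf px).
have xc0 : x *~ ccoef l x = 0.
  apply: NNPP => /xS; apply; rewrite -[_ *~ _]opprK -mulrN1z.
  apply/spanMz; suff -> : - (x *~ ccoef l x) = csum l' by apply: span_csum.
  by apply/eqP; rewrite eqr_oppLR -subr_eq0 opprK /l' -csum_filter_neq l0.
move=> y; case: (eqVneq y x) => [->//|yx].
rewrite -(ccoef_filter_neq l yx); apply: hS => //.
by rewrite (csum_filter_neq l x) xc0 add0r in l0.
Qed.

Lemma max_independent_mulz_span S w : max_independent S -> w <> 0 ->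
  exists c, w *~ c <> 0 /\ span S (w *~ c).
Proof.
move=> [indS maxS] w0; case: (classic (S w)) => [Sw|nSw].
  by exists 1; rewrite mulr1z; split=> //; apply: span_mem.
apply: NNPP => nwS; apply: (maxS w nSw); apply: independent_adjoin => // c wc0 wcS.
by apply: nwS; exists c.
Qed.

Lemma max_independent_order2_span S w : max_independent S -> w *+ 2 = 0 -> span S w.
Proof.
move=> maxS w2; case: (eqVneq w 0) => [->|/eqP w0]; first exact: span0.
have [c []] := max_independent_mulz_span maxS w0.
by rewrite order2_mulz //; case: ifP.
Qed.

Lemma independent_adjoin_span S y c : independent (fun x => S x \/ x = y) -> ~ S y ->
  span S (y *~ c) -> y *~ c = 0.
Proof.
move=> indSy nSy /spanP[l hl lc].
have hyl : comb_in (fun x => S x \/ x = y) [:: (y, c)] by apply: comb_in1; right.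
have hl' : comb_in (fun x => S x \/ x = y) l := comb_in_sub (fun x Sx => or_introl Sx) hl.
have := independent_ccoef indSy hyl hl' (etrans (csum1 y c) lc) y.
rewrite ccoef1 eqxx ccoef_notin ?subr0 //.
by apply/mapP => -[p /hl Sp py]; apply: nSy; rewrite py.
Qed.

Lemma independent_union_order2 S T :
  independent S -> (forall x, S x -> infinite_order x) ->
  independent T -> (forall x, T x -> x *+ 2 = 0) ->
  independent (fun x => S x \/ T x).
Proof.
move=> /independentP[S0 indS] Sinf /independentP[T0 indT] T2.
apply/independentP; split=> [x [/S0|/T0] //|l hl l0].
pose a := fun p : G * int => p.1 *+ 2 != 0.
set lS := [seq p <- l | a p]; set lT := [seq p <- l | ~~ a p].
have hlS : comb_in S lS.
  move=> p; rewrite mem_filter => /andP[/eqP p2 /hl[//|/T2]]; contradiction.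
have hlT : comb_in T lT.
  move=> p; rewrite mem_filter negbK => /andP[/eqP p2 /hl[/Sinf Sp|//]].
  by have := Sp 2%N isT.
have lT2 : csum lT *~ 2 = 0.
  rewrite /csum mulrz_suml big1_seq // => p /andP[_].
  by rewrite mem_filter negbK => /andP[/eqP p2 _]; rewrite -mulrzA mulrC mulrzA -pmulrn p2 mul0rz.
have lS2 : csum lS *~ 2 = 0.
  move: l0; rewrite (csum_split a) -/lS -/lT => /eqP; rewrite addr_eq0 => /eqP ->.
  by rewrite mulNrz lT2 oppr0.
have lS0 : forall y, S y -> ccoef lS y = 0.
  move=> y Sy; apply: (@mulIf _ 2) => //; rewrite mul0r.
  apply: infinite_order_mulz_eq0 (Sinf _ Sy) _; rewrite -ccoef_scale.
  apply: indS; first exact: comb_in_scale.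
  by rewrite csum_scale.
have sumS : csum lS = 0 := csum_eq0_ccoef hlS lS0.
have sumT : csum lT = 0 by move: l0; rewrite (csum_split a) -/lS -/lT sumS add0r.
move=> y; rewrite (ccoef_split a) -/lS -/lT mulrzDr.
have [/mapP[p /hlS Sp ->]|/ccoef_notin->] := boolP (y \in map fst lS).
  rewrite lS0 // mulr0z add0r ccoef_notin ?mulr0z //.
  apply/mapP => -[q]; rewrite mem_filter negbK => /andP[/eqP q2 _] pq.
  by apply: (Sinf _ Sp 2%N isT); rewrite pq.
by rewrite mulr0z add0r; apply: indT hlT sumT y.
Qed.

Lemma quotient_2primary_torsion S y n :
  independent S -> (forall x, S x -> infinite_order x) -> quotient_2primary S ->
  (0 < n)%N -> y *+ n = 0 -> exists k, y *+ 2 ^ k = 0.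
Proof.
move=> /independentP[_ indS] Sinf q2 n0 yn; have [k /spanP[l hl lk]] := q2 y.
exists k; rewrite lk; apply: (csum_eq0_ccoef hl) => z Sz.
apply: (@mulIf _ n%:Z); first by rewrite eqz_nat -lt0n.
rewrite mul0r; apply: infinite_order_mulz_eq0 (Sinf _ Sz) _.
rewrite -ccoef_scale; apply: indS; first exact: comb_in_scale.
by rewrite csum_scale -lk -pmulrn -mulrnA mulnC mulrnA yn mul0rn.
Qed.

End Independence.

Definition eqmodZ (q r : rat) := q - r \is a Num.int.

Lemma eqmodZ_refl q : eqmodZ q q.
Proof. by rewrite /eqmodZ subrr. Qed.

Lemma eqmodZ_sym q r : eqmodZ q r -> eqmodZ r q.
Proof. by rewrite /eqmodZ -opprB rpredN. Qed.

Lemma eqmodZ_trans q r s : eqmodZ q r -> eqmodZ r s -> eqmodZ q s.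
Proof. by rewrite /eqmodZ => qr rs; rewrite -[q](subrK r) -addrA rpredD. Qed.

Lemma eqmodZD q q' r r' : eqmodZ q q' -> eqmodZ r r' -> eqmodZ (q + r) (q' + r').
Proof. by rewrite /eqmodZ opprD addrACA; apply: rpredD. Qed.

Lemma eqmodZN q r : eqmodZ q r -> eqmodZ (- q) (- r).
Proof. by rewrite /eqmodZ -opprD rpredN. Qed.

Lemma eqmodZMz (t : int) q r : eqmodZ q r -> eqmodZ (t%:~R * q) (t%:~R * r).
Proof. by rewrite /eqmodZ -mulrBr; apply/rpredM/intr_int. Qed.

Lemma eqmodZ0 q : eqmodZ q 0 = (q \is a Num.int).
Proof. by rewrite /eqmodZ subr0. Qed.

Lemma half_intE (c : int) : (c%:~R / 2 : rat) \is a Num.int = ~~ odd `|c|%N.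
Proof.
apply/idP/idP => [/intrP[m cm]|even_c].
  have -> : c = m * 2 by apply: (@intr_inj rat); rewrite intrM -cm mulfVK.
  by rewrite abszM oddM andbF.
have c2 : (2 %| c)%Z by rewrite dvdzE dvdn2.
by rewrite -(divzK c2) intrM mulfK ?intr_int.
Qed.

Definition frac (q : rat) := q - (Num.floor q)%:~R.

Lemma eqmodZ_frac q : eqmodZ q (frac q).
Proof. by rewrite /eqmodZ /frac opprB addrC subrK intr_int. Qed.

Lemma frac_itv q : 0 <= frac q < 1.
Proof.
have /andP[] := floor_itv q.
by rewrite /frac subr_ge0 intrD ltrBlDl => -> ->.
Qed.

Lemma frac_eq q r : eqmodZ q r -> 0 <= r < 1 -> frac q = r.
Proof.
move=> /intrP[m qr] /andP[r0 r1]; rewrite /frac.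
have -> : Num.floor q = m.
  by apply: floor_def; rewrite -[q](subrK r) qr intrD lerDl r0 ltrD2l.
by rewrite -qr opprB addrC subrK.
Qed.

Lemma frac_int q : q \is a Num.int -> frac q = 0.
Proof. by move=> qZ; apply: frac_eq; rewrite ?eqmodZ0 // lexx ltr01. Qed.

Definition subgroup (G : zmodType) (P : G -> Prop) :=
  P 0 /\ forall u v, P u -> P v -> P (u - v).

Section Subgroup.
Variables (G : zmodType) (P : G -> Prop).
Hypothesis subP : subgroup P.

Lemma subgroup0 : P 0. Proof. by case: subP. Qed.
Lemma subgroupB u v : P u -> P v -> P (u - v). Proof. by case: subP => _; apply. Qed.
Lemma subgroupN u : P u -> P (- u).
Proof. by move=> Pu; rewrite -sub0r; apply: subgroupB => //; apply: subgroup0. Qed.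
Lemma subgroupD u v : P u -> P v -> P (u + v).
Proof. by move=> Pu Pv; rewrite -[v]opprK; apply/subgroupB/subgroupN. Qed.
Lemma subgroupMn u n : P u -> P (u *+ n).
Proof.
move=> Pu; elim: n => [|n IHn]; first by rewrite mulr0n; apply: subgroup0.
by rewrite mulrS; apply: subgroupD.
Qed.
Lemma subgroupMz u c : P u -> P (u *~ c).
Proof.
move=> Pu; case: c => n; first exact: subgroupMn.
by rewrite NegzE mulrNz; apply/subgroupN; rewrite -pmulrn; apply: subgroupMn.
Qed.

End Subgroup.

Lemma subgroup_span (G : zmodType) (S : G -> Prop) : subgroup (span S).
Proof. by split; [apply: span0|apply: spanB]. Qed.

Lemma int_subgroup_dvd (P : int -> Prop) : subgroup P ->
  exists d : nat, forall c, P c <-> (d %| c)%Z.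
Proof.
move=> subP; case: (classic (exists d, (0 < d)%N /\ P d)) => [posP|no_pos]; last first.
  exists 0%N => c; rewrite dvd0z; split=> [Pc|/eqP ->]; last exact: subgroup0.
  apply/eqP; case: c Pc => [[|n]|n] Pc //; case: no_pos; exists n.+1 => //.
  by split=> //; rewrite -[Posz _]opprK -NegzE; apply: subgroupN.
have [d [[d0 Pd] mind]] := ex_least_nat posP.
exists d => c; split=> [Pc|/dvdzP[t ->]]; last by rewrite mulrC -mulrzz; apply: subgroupMz.
have d0' : d%:Z != 0 by rewrite eqz_nat -lt0n.
have Pcd : P (c %% d)%Z.
  have -> : (c %% d)%Z = c - (c %/ d)%Z * d by rewrite {2}(divz_eq c d) addrC addKr.
  by apply: subgroupB => //; rewrite mulrC -mulrzz; apply: subgroupMz.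
apply/dvdz_mod0P; move: Pcd (modz_ge0 c d0') (ltz_pmod c (d0 : 0 < d%:Z)).
case: (c %% d)%Z => [[|r]|r] // Pr _; rewrite ltz_nat => rd.
by have := mind r.+1 (conj isT Pr); rewrite leqNgt rd.
Qed.

Definition additive_modZ (G : zmodType) (J : Type) (P : G -> Prop) (f : G -> J -> rat) :=
  forall u v, P u -> P v -> forall j, eqmodZ (f (u + v) j) (f u j + f v j).

Section AdditiveModZ.
Variables (G : zmodType) (J : Type) (P : G -> Prop) (f : G -> J -> rat).
Hypotheses (subP : subgroup P) (addf : additive_modZ P f).

Lemma additive_modZ0 j : eqmodZ (f 0 j) 0.
Proof.
have := addf (subgroup0 subP) (subgroup0 subP) j.
by rewrite addr0 eqmodZ0 /eqmodZ opprD addNKr rpredN.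
Qed.

Lemma additive_modZN u j : P u -> eqmodZ (f (- u) j) (- f u j).
Proof.
move=> Pu; have := addf Pu (subgroupN subP Pu) j; rewrite subrr => f0.
have := eqmodZ_trans (eqmodZ_sym f0) (additive_modZ0 j).
by rewrite /eqmodZ subr0 opprK addrC.
Qed.

Lemma additive_modZMn u n j : P u -> eqmodZ (f (u *+ n) j) (n%:R * f u j).
Proof.
move=> Pu; elim: n => [|n IHn]; first by rewrite mulr0n mul0r additive_modZ0.
have -> : n.+1%:R * f u j = f u j + n%:R * f u j by rewrite mulrS mulrDl mul1r.
rewrite mulrS.
exact: eqmodZ_trans (addf Pu (subgroupMn subP n Pu) j) (eqmodZD (eqmodZ_refl _) IHn).
Qed.

Lemma additive_modZMz u c j : P u -> eqmodZ (f (u *~ c) j) (c%:~R * f u j).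
Proof.
move=> Pu; case: c => n; first exact: additive_modZMn.
rewrite NegzE mulrNz mulrNz mulNr -!pmulrn.
apply: eqmodZ_trans (additive_modZN _ (subgroupMn subP _ Pu)) _.
exact/eqmodZN/additive_modZMn.
Qed.

End AdditiveModZ.

Definition finsupp_modZ (J : Type) (u : J -> rat) :=
  exists s : list J, forall j, ~ List.In j s -> u j \is a Num.int.

Lemma finsupp_modZD (J : Type) (u v : J -> rat) :
  finsupp_modZ u -> finsupp_modZ v -> finsupp_modZ (fun j => u j + v j).
Proof.
move=> [s1 h1] [s2 h2]; exists (s1 ++ s2) => j nj.
by apply: rpredD; [apply: h1|apply: h2] => js; apply/nj/List.in_or_app; auto.
Qed.

Section SocleBasis.
Variables (G : zmodType) (e : G -> nat).
Hypothesis e_inj : injective e.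

Definition socle_basis (x : G) :=
  x *+ 2 = 0 /\ ~ span (fun y => y *+ 2 = 0 /\ (e y < e x)%N) x.

Lemma socle_basis_neq0 x : socle_basis x -> x <> 0.
Proof. by move=> [_ nspan] x0; apply: nspan; rewrite x0; apply: span0. Qed.

Lemma socle_basis_lt_independent n :
  independent (fun x => socle_basis x /\ (e x < n)%N).
Proof.
elim: n => [|n IHn]; first by split=> [x [] //|s c _ hs _ x /hs[]].
case: (classic (exists x, socle_basis x /\ e x = n)) => [[x [bx ex]]|nx].
  apply: (@independent_sub _ _ (fun y => (socle_basis y /\ (e y < n)%N) \/ y = x)).
    move=> y [yb]; rewrite ltnS leq_eqVlt => /orP[/eqP ey|]; last by left.
    by right; apply: e_inj; rewrite ey ex.
  apply: independent_adjoin => // [|c]; first exact: socle_basis_neq0.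
  rewrite order2_mulz ?bx.1 //; case: ifP => // _ _ xspan; apply: bx.2.
  by apply: span_sub xspan => y [[y2 _] yn]; rewrite ex.
apply: independent_sub IHn => y [yb]; rewrite ltnS leq_eqVlt => /orP[/eqP ey|]; last by [].
by case: nx; exists y.
Qed.

Lemma socle_basis_independent : independent socle_basis.
Proof.
split=> [x /socle_basis_neq0 //|s c us hs].
have /(_ (\max_(y <- s) e y).+1) [_] := socle_basis_lt_independent; apply=> // y ys.
by split; [apply: hs|rewrite ltnS; apply: leq_bigmax_seq].
Qed.

Lemma socle_span_basis z : z *+ 2 = 0 -> span socle_basis z.
Proof.
have [n] := ubnP (e z); elim: n z => // n IHn z zn z2.
case: (classic (span (fun y => y *+ 2 = 0 /\ (e y < e z)%N) z)) => [zspan|]; last first.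
  by move=> nspan; apply: span_mem.
apply: span_span; apply: span_sub zspan => y [y2 yz].
by apply: IHn y2; apply: leq_trans yz _; rewrite -ltnS.
Qed.

Variable S : G -> Prop.
Hypotheses (maxS : max_independent_inf S) (q2S : quotient_2primary S).

Lemma max_independent_socle_basis : max_independent (fun x => S x \/ socle_basis x).
Proof.
have [indS [Sinf maxSinf]] := maxS.
split=> [|y nUy indUy].
  by apply: independent_union_order2 => // [|x []]; first exact: socle_basis_independent.
have y0 : y <> 0 by apply: indUy.1; right.
case: (classic (infinite_order y)) => [yinf|].
  apply: (maxSinf y) => [Sy|//|]; first by apply: nUy; left.
  by apply: independent_sub indUy => x [Sx|->]; [left; left|right].
move=> yfin; have [n /(@imply_to_and (0 < n)%N) [n0 /NNPP yn]] := not_all_ex_not _ _ yfin.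
have [k yk] := quotient_2primary_torsion indS Sinf q2S n0 yn.
have [m [ym2 ym0]] := exists_order2_multiple yk y0.
apply: ym0; rewrite pmulrn; apply: independent_adjoin_span indUy nUy _.
by rewrite -pmulrn; apply: span_sub (socle_span_basis ym2) => x bx; right.
Qed.
End SocleBasis.

Lemma exists_proj1_sigE (T : Type) (P : T -> Prop) x :
  (exists i : {y | P y}, x = proj1_sig i) = P x.
Proof.
by apply: propositional_extensionality; split=> [[[y Py] ->//]|Px]; exists (exist _ x Px).
Qed.

Lemma proj1_sig_inj (T : Type) (P : T -> Prop) : injective (@proj1_sig T P).
Proof. exact: eq_sig_hprop (fun _ => proof_irrelevance _). Qed.

Lemma exists_adapted_system (G : zmodType) : countable_group G -> even_by_quotient G ->
  exists (I J : Type) (g : I -> G) (h : J -> G),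
    adapted_system g h /\ quotient_2primary (fun x => exists i, x = g i).
Proof.
move=> [e e_inj] [S [maxS q2S]]; have [_ [Sinf _]] := maxS.
exists {x | S x}, {x | socle_basis e x}, (@proj1_sig _ _), (@proj1_sig _ _).
have rangeE P : (fun x : G => exists i : {x | P x}, x = proj1_sig i) = P.
  by apply: functional_extensionality => x; apply: exists_proj1_sigE.
rewrite rangeE; split=> //.
split; first exact: proj1_sig_inj.
split; first exact: proj1_sig_inj.
split=> [[x Sx] [y [y2 _]] /= xy|]; first by apply: (Sinf x Sx 2%N); rewrite ?xy.
split=> [[x Sx]|]; first exact: Sinf.
split=> [[x [x2 _]] //|].
have -> : (fun x => (exists i : {x | S x}, x = proj1_sig i) \/
                    (exists j : {x | socle_basis e x}, x = proj1_sig j)) =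
          (fun x => S x \/ socle_basis e x).
  by apply: functional_extensionality => x; rewrite !exists_proj1_sigE.
exact: max_independent_socle_basis.
Qed.

Section DyadicCoordinates.
Variables (G : zmodType) (I : Type) (g : I -> G).
Let Sg x := exists i, x = g i.
Hypotheses (g_inj : injective g) (g_inf : forall i, infinite_order (g i)).
Hypotheses (indg : independent Sg) (q2g : quotient_2primary Sg).

Definition coord_rep (x : G) : nat * seq (G * int) :=
  epsilon (inhabits (0%N, [::])) (fun kl => comb_in Sg kl.2 /\ x *+ 2 ^ kl.1 = csum kl.2).

Lemma coord_repP x :
  comb_in Sg (coord_rep x).2 /\ x *+ 2 ^ (coord_rep x).1 = csum (coord_rep x).2.
Proof.
apply: (epsilon_spec _ (fun kl => comb_in Sg kl.2 /\ x *+ 2 ^ kl.1 = csum kl.2)).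
by have [k /spanP[l hl lk]] := q2g x; exists (k, l).
Qed.

Definition coord (x : G) (i : I) : rat :=
  (ccoef (coord_rep x).2 (g i))%:~R / (2 ^ (coord_rep x).1)%:R.

Lemma coordE x k l i : comb_in Sg l -> x *+ 2 ^ k = csum l ->
  coord x i = (ccoef l (g i))%:~R / (2 ^ k)%:R.
Proof.
move=> hl lk; rewrite /coord; have [hl' lk'] := coord_repP x.
set k' := (coord_rep x).1 in lk' *; set l' := (coord_rep x).2 in hl' lk' *.
have sums : csum (cscale l' (2 ^ k)%N) = csum (cscale l (2 ^ k')%N).
  by rewrite !csum_scale -lk -lk' -!pmulrn -!mulrnA -!expnD addnC.
have := infinite_order_mulz_eq0 (@g_inf i)
  (independent_ccoef indg (comb_in_scale hl') (comb_in_scale hl) sums (g i)).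
move/eqP; rewrite !ccoef_scale subr_eq0 => /eqP e.
have pow2_neq0 n : (2 ^ n)%:R != 0 :> rat by rewrite pnatr_eq0 expn_eq0.
apply/eqP; rewrite eqr_div ?pow2_neq0 //; apply/eqP.
by move/(congr1 (fun z : int => z%:~R : rat)): e; rewrite /= !intrM -!pmulrn.
Qed.

Lemma coordD x y i : coord (x + y) i = coord x i + coord y i.
Proof.
have [hx ex] := coord_repP x; have [hy ey] := coord_repP y.
set kx := (coord_rep x).1 in ex *; set lx := (coord_rep x).2 in hx ex *.
set ky := (coord_rep y).1 in ey *; set ly := (coord_rep y).2 in hy ey *.
rewrite (@coordE (x + y) (kx + ky) (cscale lx (2 ^ ky)%N ++ cscale ly (2 ^ kx)%N) i).
- rewrite (coordE i hx ex) (coordE i hy ey) ccoef_cat !ccoef_scale expnD natrM.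
  by rewrite intrD !intrM -!pmulrn; field; rewrite !pnatr_eq0 !expn_eq0.
- by apply: comb_in_cat; apply: comb_in_scale.
- rewrite csum_cat !csum_scale -ex -ey -!pmulrn -!mulrnA -!expnD mulrnDl.
  by rewrite addnC.
Qed.

Lemma coord_dyadic x i : dyadic (coord x i).
Proof. by exists (ccoef (coord_rep x).2 (g i)), (coord_rep x).1. Qed.

Lemma coord_finsupp x : exists s : list I, forall i, coord x i <> 0 -> List.In i s.
Proof.
have [s hs] := list_preimage (map fst (coord_rep x).2) g_inj.
exists s => i; rewrite /coord.
by have [/hs//|/ccoef_notin->] := boolP (g i \in map fst (coord_rep x).2); rewrite mul0r.
Qed.

Lemma coord_g i : coord (g i) i = 1 /\ forall i', i' <> i -> coord (g i) i' = 0.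
Proof.
have hl : comb_in Sg [:: (g i, 1)] by apply: comb_in1; exists i.
have gi1 : g i *+ 2 ^ 0 = csum [:: (g i, 1)] by rewrite csum1 mulr1n.
split=> [|i' i'i]; rewrite (coordE _ hl gi1) ccoef1 ?eqxx ?divr1 //.
by case: eqP => [/g_inj/esym//|_]; rewrite mulr0z.
Qed.

Lemma coord_torsion x k i : x *+ 2 ^ k = 0 -> coord x i = 0.
Proof. by move=> xk; rewrite (@coordE x k [::]) ?ccoef_nil ?mul0r ?csum_nil. Qed.

Lemma coord_eq0_torsion x : (forall i, coord x i = 0) -> exists k, x *+ 2 ^ k = 0.
Proof.
move=> x0; have [hl lk] := coord_repP x; exists (coord_rep x).1; rewrite lk.
apply: (csum_eq0_ccoef hl) => _ [i ->]; apply/eqP.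
by have /eqP := x0 i; rewrite mulf_eq0 invr_eq0 pnatr_eq0 expn_eq0 orbF intr_eq0.
Qed.

End DyadicCoordinates.

Section ExtensionModZ.
Variables (G : zmodType) (J : Type) (P : G -> Prop) (phi0 : G -> J -> rat).
Variables (xs : nat -> G) (idx : G -> nat).
Hypothesis xs_idx : cancel idx xs.
Hypotheses (subP : subgroup P) (add_phi0 : additive_modZ P phi0).
Hypothesis fin_phi0 : forall x, finsupp_modZ (phi0 x).

Fixpoint B n : G -> Prop :=
  match n with
  | 0%N => P
  | n'.+1 => fun z => exists b m, B n' b /\ z = b + xs n' *~ m
  end.

Lemma subgroup_B n : subgroup (B n).
Proof.
elim: n => [//|n IHn]; split=> [|_ _ [b1 [m1 [Bb1 ->]]] [b2 [m2 [Bb2 ->]]]].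
  by exists 0, 0; rewrite mulr0z addr0; split=> //; apply: subgroup0.
exists (b1 - b2), (m1 - m2); split; first exact: subgroupB.
by rewrite mulrzBr opprD addrACA.
Qed.

Lemma B_le n m u : (n <= m)%N -> B n u -> B m u.
Proof.
elim: m => [|m IHm]; first by rewrite leqn0 => /eqP ->.
rewrite leq_eqVlt => /orP[/eqP -> //|/IHm nm /nm Bu].
by exists u, 0; rewrite mulr0z addr0.
Qed.

Lemma B_idx x : B (idx x).+1 x.
Proof.
exists 0, 1; rewrite add0r mulr1z xs_idx; split=> //.
exact: (subgroup0 (subgroup_B _)).
Qed.

Lemma B_multiples_dvd n : exists d : nat, forall c, B n (xs n *~ c) <-> (d %| c)%Z.
Proof.
apply: int_subgroup_dvd; split=> [|a b Ba Bb].
  by rewrite mulr0z; apply: (subgroup0 (subgroup_B _)).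
by rewrite mulrzBr; apply: (subgroupB (subgroup_B n)).
Qed.

Definition rel_order n : nat :=
  epsilon (inhabits 0%N) (fun d => forall c, B n (xs n *~ c) <-> (d %| c)%Z).

Lemma rel_orderP n c : B n (xs n *~ c) <-> (rel_order n %| c)%Z.
Proof.
move: c; apply: (epsilon_spec _ (fun d : nat => forall c, B n (xs n *~ c) <-> (d %| c)%Z)).
exact: B_multiples_dvd.
Qed.

(* When [rel_order n = 0] the division by zero makes this [0]. *)
Definition next_value n (ph : G -> J -> rat) j : rat :=
  frac (ph (xs n *+ rel_order n) j) / (rel_order n)%:R.

Definition decomp n z : G * int :=
  epsilon (inhabits (0, 0)) (fun bm => B n bm.1 /\ z = bm.1 + xs n *~ bm.2).

Definition step n (ph : G -> J -> rat) z j : rat :=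
  ph (decomp n z).1 j + (decomp n z).2%:~R * next_value n ph j.

Lemma B_rel_order n : B n (xs n *+ rel_order n).
Proof. by rewrite pmulrn; apply/rel_orderP/dvdzz. Qed.

Section Step.
Variables (n : nat) (ph : G -> J -> rat).
Hypothesis add_ph : additive_modZ (B n) ph.

Lemma next_valueP j : eqmodZ ((rel_order n)%:R * next_value n ph j) (ph (xs n *+ rel_order n) j).
Proof.
rewrite /next_value; case: (eqVneq (rel_order n) 0%N) => [->|gn0].
  by rewrite mul0r mulr0n; apply/eqmodZ_sym/(additive_modZ0 (subgroup_B n) add_ph).
by rewrite mulrC divfK ?pnatr_eq0 //; apply/eqmodZ_sym/eqmodZ_frac.
Qed.

Lemma stepE b m j : B n b ->
  eqmodZ (step n ph (b + xs n *~ m) j) (ph b j + m%:~R * next_value n ph j).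
Proof.
move=> Bb; rewrite /step.
have [] := epsilon_spec (inhabits (0, 0))
  (fun bm => B n bm.1 /\ b + xs n *~ m = bm.1 + xs n *~ bm.2) (ex_intro _ (b, m) (conj Bb erefl)).
rewrite -/(decomp n _); case: (decomp n _) => b' m' /= Bb' e.
have bb' : b + xs n *~ (m - m') = b' by rewrite mulrzBr addrA e addrK.
have Bmm' : B n (xs n *~ (m - m')).
  by rewrite -[xs n *~ _](addKr b) bb' addrC; apply: (subgroupB (subgroup_B n)).
have /dvdzP[t mm'] := (rel_orderP n _).1 Bmm'.
have ph_b' : eqmodZ (ph b' j) (ph b j + t%:~R * ((rel_order n)%:R * next_value n ph j)).
  rewrite -bb'; apply: eqmodZ_trans (add_ph Bb Bmm' j) (eqmodZD (eqmodZ_refl _) _).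
  rewrite mm' mulrC mulrzA -pmulrn.
  apply: eqmodZ_trans (additive_modZMz (subgroup_B n) add_ph t j (B_rel_order n)) _.
  exact/eqmodZMz/eqmodZ_sym/next_valueP.
apply: eqmodZ_trans (eqmodZD ph_b' (eqmodZ_refl (m'%:~R * next_value n ph j))) _.
have -> : m = t * (rel_order n)%:Z + m' by rewrite -mm' subrK.
by rewrite intrD intrM -[((rel_order n)%:Z)%:~R]pmulrn mulrDl mulrA addrA; apply: eqmodZ_refl.
Qed.

Lemma step_extends u j : B n u -> eqmodZ (step n ph u j) (ph u j).
Proof. by move=> Bu; have := stepE 0 j Bu; rewrite mulr0z addr0 mul0r addr0. Qed.

Lemma step_additive : additive_modZ (B n.+1) (step n ph).
Proof.
move=> _ _ [b1 [m1 [Bb1 ->]]] [b2 [m2 [Bb2 ->]]] j.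
rewrite addrACA -mulrzDr.
apply: eqmodZ_trans (stepE _ j (subgroupD (subgroup_B n) Bb1 Bb2)) _.
apply: eqmodZ_sym; apply: eqmodZ_trans (eqmodZD (stepE _ j Bb1) (stepE _ j Bb2)) _.
rewrite addrACA -mulrDl -intrD; apply: eqmodZD (eqmodZ_refl _).
exact/eqmodZ_sym/add_ph.
Qed.
End Step.

Lemma step_finsupp n ph : (forall z, finsupp_modZ (ph z)) -> forall z, finsupp_modZ (step n ph z).
Proof.
move=> fin_ph z; apply: finsupp_modZD (fin_ph _) _.
have [s hs] := fin_ph (xs n *+ rel_order n); exists s => j /hs ph_int.
by rewrite /next_value frac_int // mul0r mulr0.
Qed.

Fixpoint phi n : G -> J -> rat :=
  if n is n'.+1 then step n' (phi n') else phi0.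

Lemma phi_additive n : additive_modZ (B n) (phi n).
Proof. by elim: n => [//|n IHn]; apply: step_additive. Qed.

Lemma phi_finsupp n z : finsupp_modZ (phi n z).
Proof. by elim: n z => [//|n IHn]; apply: step_finsupp. Qed.

Lemma phi_extends n m u j : (n <= m)%N -> B n u -> eqmodZ (phi m u j) (phi n u j).
Proof.
move=> nm Bu; elim: m nm => [|m IHm]; first by rewrite leqn0 => /eqP ->; apply: eqmodZ_refl.
rewrite leq_eqVlt => /orP[/eqP ->|nm]; first exact: eqmodZ_refl.
apply: eqmodZ_trans (IHm nm); apply: step_extends; first exact: phi_additive.
by rewrite ltnS in nm; apply: B_le nm Bu.
Qed.

Lemma phi_idx x m j : (idx x < m)%N -> eqmodZ (phi (idx x).+1 x j) (phi m x j).
Proof. by move=> xm; apply: eqmodZ_sym; apply: phi_extends xm (B_idx x). Qed.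

Lemma extension_modZ : exists f : G -> J -> rat,
  [/\ additive_modZ (fun _ => True) f,
      forall x, P x -> forall j, eqmodZ (f x j) (phi0 x j)
    & forall x, finsupp_modZ (f x)].
Proof.
exists (fun x => phi (idx x).+1 x); split=> [x y _ _ j|x Px j|x]; last exact: phi_finsupp.
  pose M := (maxn (idx (x + y)) (maxn (idx x) (idx y))).+1.
  have [xyM xM yM] : [/\ idx (x + y) < M, idx x < M & idx y < M]%N.
    by split; rewrite ltnS !leq_max leqnn ?orbT.
  apply: eqmodZ_trans (phi_idx j xyM) _; apply: eqmodZ_sym.
  apply: eqmodZ_trans (eqmodZD (phi_idx j xM) (phi_idx j yM)) _; apply: eqmodZ_sym.
  by apply: phi_additive; apply: B_le (B_idx _).
exact: phi_extends (leq0n _) Px.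
Qed.

End ExtensionModZ.

Section AdaptedEmbedding.
Variables (G : zmodType) (I J : Type) (g : I -> G) (h : J -> G).
Hypotheses (adapted : adapted_system g h) (q2g : quotient_2primary (fun x => exists i, x = g i)).
Let L x := (exists i, x = g i) \/ (exists j, x = h j).

Let g_inj : injective g. Proof. by case: adapted. Qed.
Let h_inj : injective h. Proof. by case: adapted => _ []. Qed.
Let g_neq_h i j : g i <> h j. Proof. by case: adapted => _ [_ []]. Qed.
Let g_inf i : infinite_order (g i). Proof. by case: adapted => _ [_ [_ []]]. Qed.
Let h2 j : h j *+ 2 = 0. Proof. by case: adapted => _ [_ [_ [_ []]]]. Qed.
Let maxL : max_independent L. Proof. by case: adapted => _ [_ [_ [_ []]]]. Qed.
Let indL : independent L. Proof. by case: maxL. Qed.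
Let indg : independent (fun x => exists i, x = g i).
Proof. by apply: independent_sub indL => x gx; left. Qed.

Definition half_coef (z : G) (j : J) : rat :=
  (ccoef (epsilon (inhabits [::]) (fun l => comb_in L l /\ z = csum l)) (h j))%:~R / 2.

Lemma half_coefE l j : comb_in L l -> eqmodZ (half_coef (csum l) j) ((ccoef l (h j))%:~R / 2).
Proof.
move=> hl; rewrite /half_coef.
have [hl' ll'] := epsilon_spec (inhabits [::]) (fun l' => comb_in L l' /\ csum l = csum l')
  (ex_intro _ l (conj hl erefl)).
move: (epsilon _ _) hl' ll' => l' hl' ll'.
have := independent_ccoef indL hl' hl (esym ll') (h j); rewrite order2_mulz ?h2 //.
have hj0 : h j != 0 by apply/eqP/(proj1 indL); right; exists j.
case: ifP => [_ /eqP|/negbT even_diff _]; first by rewrite (negPf hj0).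
by rewrite /eqmodZ -mulrBl -intrB half_intE.
Qed.

Lemma half_coef_additive : additive_modZ (span L) half_coef.
Proof.
move=> _ _ /spanP[l1 hl1 ->] /spanP[l2 hl2 ->] j; rewrite -csum_cat.
apply: eqmodZ_trans (half_coefE j (comb_in_cat hl1 hl2)) _.
rewrite ccoef_cat intrD mulrDl.
by apply: eqmodZD; apply: eqmodZ_sym; apply: half_coefE.
Qed.

Lemma half_coef_finsupp z : finsupp_modZ (half_coef z).
Proof.
rewrite /half_coef; set l := epsilon _ _.
have [s hs] := list_preimage (map fst l) h_inj.
exists s => j jns; have [/hs//|/ccoef_notin->] := boolP (h j \in map fst l).
by rewrite mul0r.
Qed.

Section Normalization.
Variable f : G -> J -> rat.
Hypotheses (f_add : additive_modZ (fun _ => True) f).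
Hypothesis f_ext : forall x, span L x -> forall j, eqmodZ (f x j) (half_coef x j).
Hypothesis f_fin : forall x, finsupp_modZ (f x).

Let subT : subgroup (fun _ : G => True). Proof. by []. Qed.

Lemma f_csum l j : comb_in L l -> eqmodZ (f (csum l) j) ((ccoef l (h j))%:~R / 2).
Proof. by move=> hl; apply: eqmodZ_trans (f_ext (span_csum hl) j) (half_coefE j hl). Qed.

Lemma f_pow2 x k j : eqmodZ (f (x *+ 2 ^ k) j) ((2 ^ k)%:R * f x j).
Proof. exact: (additive_modZMn subT f_add). Qed.

Lemma frac_f_dyadic x j : Z2inf_rep (frac (f x j)).
Proof.
split; last by have /andP[-> ->] := frac_itv (f x j).
have [hl xk] := coord_repP q2g x; set k := (coord_rep _ x).1 in xk.
have : eqmodZ ((2 ^ k)%:R * frac (f x j)) 0.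
  apply: eqmodZ_trans (eqmodZMz (2 ^ k)%N (eqmodZ_sym (eqmodZ_frac _))) _.
  rewrite -pmulrn; apply: eqmodZ_trans (eqmodZ_sym (f_pow2 _ _ _)) _.
  rewrite xk; apply: eqmodZ_trans (f_csum j (comb_in_sub (fun _ gy => or_introl gy) hl)) _.
  rewrite ccoef_notin ?mul0r ?eqmodZ_refl //.
  by apply/mapP => -[p /hl[i ->] pj]; apply: (@g_neq_h i j).
rewrite eqmodZ0 => /intrP[m mk]; exists m, k.
by rewrite -mk mulrAC divff ?mul1r // pnatr_eq0 expn_eq0.
Qed.

Lemma frac_f_finsupp x : exists s : list J, forall j, frac (f x j) <> 0 -> List.In j s.
Proof.
have [s hs] := f_fin x; exists s => j fj; apply: NNPP => js.
by apply: fj; apply: frac_int; apply: hs.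
Qed.

Lemma frac_f_L y j : L y -> frac (f y j) = if y == h j then 1 / 2 else 0.
Proof.
move=> Ly; have := f_csum j (comb_in1 (c := 1) Ly); rewrite csum1 mulr1z ccoef1 => fy.
apply: frac_eq; first by case: eqP fy => _ //; rewrite mul0r.
by case: eqP => _; rewrite ?lexx ?ltr01 // mul1r invr_ge0 ler0n invf_lt1 ?ltr0n ?ltr1n.
Qed.

Lemma f_kernel z : (forall i, coord g z i = 0) -> (forall j, f z j \is a Num.int) -> z = 0.
Proof.
move=> cz fz; apply: NNPP => z0.
have [k zk] := coord_eq0_torsion q2g cz.
have [m [w2 w0]] := exists_order2_multiple zk z0.
have /spanP[l hl wl] := max_independent_order2_span maxL w2.
have even_h j : ~~ odd `|ccoef l (h j)|%N.
  rewrite -half_intE -eqmodZ0; apply: eqmodZ_trans (eqmodZ_sym (f_csum j hl)) _.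
  rewrite -wl; apply: eqmodZ_trans (f_pow2 _ _ _) _.
  by rewrite eqmodZ0; apply: rpredM; [apply: natr_int|apply: fz].
have /independentP[_ hL] := indL.
apply: w0; rewrite wl; apply: csum_eq0 => y.
have l2 : csum (cscale l 2) = 0 by rewrite csum_scale -wl -pmulrn w2.
have := hL _ (comb_in_scale hl) l2 y; rewrite ccoef_scale.
have [/mapP[p /hl[[i ->]|[j ->]] ->]|/ccoef_notin->] := boolP (y \in map fst l).
- by move=> /(infinite_order_mulz_eq0 (@g_inf i))/eqP; rewrite mulf_eq0 orbF => /eqP ->.
- by move=> _; rewrite order2_mulz // (negPf (even_h j)).
- by rewrite mulr0z.
Qed.

Lemma frac_f_additive x y j :
  is_integer (frac (f (x + y) j) - (frac (f x j) + frac (f y j))).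
Proof.
apply/intrP; change (eqmodZ (frac (f (x + y) j)) (frac (f x j) + frac (f y j))).
apply: eqmodZ_trans (eqmodZ_sym (eqmodZ_frac _)) _.
apply: eqmodZ_trans (@f_add x y Logic.I Logic.I j) _.
exact/eqmodZD/eqmodZ_frac/eqmodZ_frac.
Qed.

Lemma coord_frac_f_inj x y : coord g x = coord g y ->
  (fun j => frac (f x j)) = (fun j => frac (f y j)) -> x = y.
Proof.
move=> cxy fxy; apply/eqP; rewrite -subr_eq0; apply/eqP; apply: f_kernel => [i|j].
  by apply: (addIr (coord g y i)); rewrite -coordD // subrK cxy add0r.
have fx_fy : eqmodZ (f x j) (f y j).
  apply: eqmodZ_trans (eqmodZ_frac _) _.
  by rewrite (congr1 (fun b => b j) fxy); apply/eqmodZ_sym/eqmodZ_frac.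
have := eqmodZ_sym (@f_add (x - y) y Logic.I Logic.I j); rewrite subrK.
by move/eqmodZ_trans/(_ fx_fy); rewrite /eqmodZ addrK.
Qed.
End Normalization.

Lemma adapted_embedding : countable_group G ->
  exists (a : G -> I -> rat) (b : G -> J -> rat),
    dsum_monomorphism a b /\
    (forall i, a (g i) i = 1 /\ (forall i', i' <> i -> a (g i) i' = 0)
               /\ (forall j, b (g i) j = 0)) /\
    (forall j, (forall i, a (h j) i = 0) /\ b (h j) j = 1 / 2
               /\ (forall j', j' <> j -> b (h j) j' = 0)).
Proof.
move=> [e e_inj]; pose xs n := epsilon (inhabits 0) (fun x : G => e x = n).
have xs_e : cancel e xs.
  by move=> x; apply: e_inj; apply: (epsilon_spec _ (fun y => e y = e x)); exists x.
have [f [f_add f_ext f_fin]] :=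
  extension_modZ xs_e (subgroup_span L) half_coef_additive half_coef_finsupp.
have Lg i : L (g i) by left; exists i.
have Lh j : L (h j) by right; exists j.
exists (coord g), (fun x j => frac (f x j)); split; [|split].
- split; first exact: coord_dyadic.
  split; first exact: frac_f_dyadic.
  split; first exact: coord_finsupp.
  split; first exact: frac_f_finsupp.
  split; first exact: coordD.
  split; first exact: frac_f_additive.
  exact: coord_frac_f_inj.
- move=> i; have [gi gi'] := coord_g g_inj g_inf indg q2g i.
  by do !split=> //; move=> j; rewrite frac_f_L //; case: eqP => // /g_neq_h.
- move=> j; split; first by move=> i; apply: (coord_torsion g_inf indg q2g (k := 1)); rewrite h2.
  split; first by rewrite frac_f_L // eqxx.
  by move=> j' j'j; rewrite frac_f_L //; case: eqP => // /h_inj /esym.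
Qed.

End AdaptedEmbedding.

Theorem mainTheorem7 (G : zmodType)
  (cntG : countable_group G) (ebqG : even_by_quotient G) :
  (exists (I J : Type) (g : I -> G) (h : J -> G),
      adapted_system g h /\
      exists (a : G -> I -> rat) (b : G -> J -> rat), dsum_monomorphism a b) /\
  (forall (I J : Type) (g : I -> G) (h : J -> G),
      adapted_system g h ->
      quotient_2primary (fun x => exists i, x = g i) ->
      exists (a : G -> I -> rat) (b : G -> J -> rat),
        dsum_monomorphism a b /\
        (forall i, a (g i) i = 1 /\ (forall i', i' <> i -> a (g i) i' = 0)
                   /\ (forall j, b (g i) j = 0)) /\
        (forall j, (forall i, a (h j) i = 0) /\ b (h j) j = 1 / 2
                   /\ (forall j', j' <> j -> b (h j) j' = 0))).
Proof.
split=> [|I J g h adapted q2g]; last exact: adapted_embedding.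
have [I [J [g [h [adapted q2g]]]]] := exists_adapted_system cntG ebqG.
have [a [b [mono _]]] := adapted_embedding adapted q2g cntG.
by exists I, J, g, h; split=> //; exists a, b.
Qed.
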